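(* Let $\xi,\eta\in\mathrm{SL}(2,\mathbb{R})$ with $\gamma:=\xi\eta\xi^{-1}\eta^{-1}$ elliptic, let $p\in\mathbf{H}^2$ be the fixed point of $\gamma$, and set $p_4=p$, $p_3=\eta^{-1}p$, $p_2=\xi^{-1}\eta^{-1}p$, $p_1=\eta\xi^{-1}\eta^{-1}p$. Then the four points $p_1,p_2,p_3,p_4$ do not all lie on a single geodesic of $\mathbf{H}^2$.
   Context: $\mathrm{SL}(2,\mathbb{R})$ acts on the hyperbolic plane $\mathbf{H}^2$ by isometries via Möbius transformations; an element is elliptic if it fixes exactly one point of $\mathbf{H}^2$ (equivalently $|\mathrm{tr}|<2$). *)

From HB Require Import structures.
From mathcomp Require Import all_boot all_order all_algebra.
From mathcomp Require Import reals.
Set Implicit Arguments. Unset Strict Implicit. Unset Printing Implicit Defensive.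
Import Order.TTheory GRing.Theory Num.Theory.
Local Open Scope ring_scope.

Section Hyp.
Variable R : realType.

(* Points of the upper half-plane model of H^2: z = (x, y) stands for x + i y, with y > 0. *)
Definition H2 (z : R * R) : Prop := 0 < z.2.

(* Moebius action of g = [[a, b], [c, d]] : z |-> (a z + b) / (c z + d),
   written out in real coordinates. *)
Definition mob (g : 'M[R]_2) (z : R * R) : R * R :=
  let a := g 0 0 in let b := g 0 1 in let c := g 1 0 in let d := g 1 1 in
  let x := z.1 in let y := z.2 in
  let D := (c * x + d) ^+ 2 + (c * y) ^+ 2 in
  (((a * x + b) * (c * x + d) + a * c * y ^+ 2) / D, (a * d - b * c) * y / D).

Definition SL2 (g : 'M[R]_2) : Prop := \det g = 1.

Definition elliptic (g : 'M[R]_2) : Prop :=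
  exists p, [/\ H2 p, mob g p = p & forall q, H2 q -> mob g q = q -> q = p].

(* Geodesics of H^2 (as point sets): vertical half-lines and
   half-circles orthogonal to the real axis. *)
Definition is_geodesic (G : R * R -> Prop) : Prop :=
  (exists x0 : R, forall z, G z <-> (H2 z /\ z.1 = x0)) \/
  (exists (c r : R), 0 < r /\
     forall z, G z <-> (H2 z /\ (z.1 - c) ^+ 2 + z.2 ^+ 2 = r ^+ 2)).

End Hyp.

(* Write A = xi^-1 and B = eta^-1. Since gamma fixes p we have ABp = BAp, hence
   p1 = eta A B p = A p, and the four points are p, Bp, Ap and ABp = BAp. Conjugating by a
   Moebius map that sends the geodesic onto the imaginary axis, we may assume it is that axis.
   A map fixing a point iy of the axis is a rotation about iy, and is scalar if it fixes two
   points of the axis; a map sending two distinct points of the axis into the axis preserves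
   it, so it is diagonal or antidiagonal. A case analysis on whether A or B fixes p, tracking
   how each kind of map acts on heights, shows that A and B commute in every case. Then
   gamma = 1 fixes every point of H^2, so it is not elliptic. *)

From HB Require Import structures.
From mathcomp Require Import all_boot all_order all_algebra.
From mathcomp Require Import reals.
From mathcomp Require Import ring.
Import Order.TTheory GRing.Theory Num.Theory.

Set Implicit Arguments.
Unset Strict Implicit.
Unset Printing Implicit Defensive.

Local Open Scope ring_scope.

Section Matrix2.
Variable R : comPzRingType.
Implicit Types a b c d e f g h : R.

Definition mx2 a b c d : 'M[R]_2 :=
  \matrix_(i, j) if i == 0 then if j == 0 then a else b else if j == 0 then c else d.

Lemma mx2_surj (M : 'M[R]_2) : exists a b c d, M = mx2 a b c d.
Proof.
exists (M 0 0), (M 0 1), (M 1 0), (M 1 1); apply/matrixP => i j; rewrite mxE.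
by case: i => [[|[|i]] Hi]; case: j => [[|[|j]] Hj] //; congr (M _ _); apply: val_inj.
Qed.

Lemma mx2E a b c d :
  (mx2 a b c d 0 0 = a) * (mx2 a b c d 0 1 = b) * (mx2 a b c d 1 0 = c) * (mx2 a b c d 1 1 = d).
Proof. by rewrite !mxE. Qed.

Lemma mul_mx2 a b c d e f g h :
  mx2 a b c d *m mx2 e f g h =
  mx2 (a * e + b * g) (a * f + b * h) (c * e + d * g) (c * f + d * h).
Proof.
apply/matrixP => i j; rewrite !mxE !big_ord_recl big_ord0 !mxE.
by case: i => [[|[|i]] Hi]; case: j => [[|[|j]] Hj] //=; rewrite addr0.
Qed.

Lemma det_mx2 a b c d : \det (mx2 a b c d) = a * d - b * c.
Proof.
rewrite (expand_det_row _ 0) !big_ord_recl big_ord0 /cofactor !det_mx11 !mxE /=.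
by rewrite !expr0 !expr1 mul1r mulN1r addr0 mulrN.
Qed.

End Matrix2.

Section Conjugation.
Variables (R : comUnitRingType) (n : nat) (k : 'M[R]_n).
Hypothesis k_unit : k \in unitmx.

Lemma conjmx_mul (A B : 'M[R]_n) :
  (k *m A *m invmx k) *m (k *m B *m invmx k) = k *m (A *m B) *m invmx k.
Proof. by rewrite !mulmxA -(mulmxA _ (invmx k) k) mulVmx // mulmx1. Qed.

Lemma conjmx_inj : injective (fun A : 'M[R]_n => k *m A *m invmx k).
Proof.
move=> A B /(congr1 (fun X => invmx k *m X *m k)) /=.
by rewrite !mulmxA mulVmx // !mul1mx -!mulmxA mulVmx // !mulmx1.
Qed.

End Conjugation.

Section AxisMaps.
Variable R : realFieldType.
Implicit Types a b c d e f g h x y t u : R.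

Lemma mob_denom_gt0 a b c d x y : a * d - b * c != 0 -> y != 0 ->
  0 < (c * x + d) ^+ 2 + (c * y) ^+ 2.
Proof.
move=> det_neq0 y_neq0; rewrite lt0r addr_ge0 ?sqr_ge0 // andbT.
apply: contra det_neq0; rewrite paddr_eq0 ?sqr_ge0 // !sqrf_eq0 mulf_eq0.
rewrite (negbTE y_neq0) orbF => /andP[+ /eqP c0]; rewrite c0 mul0r add0r => /eqP->.
by rewrite !mulr0 subrr.
Qed.

(* The equations of [mob (mx2 a b c d) (0, y) = (0, t)], cleared of denominators. *)
Definition sends_axis a b c d y t :=
  b * d + a * c * y ^+ 2 = 0 /\ (a * d - b * c) * y = t * (d ^+ 2 + (c * y) ^+ 2).

Lemma axis_denom_gt0 a b c d y : 0 < a * d - b * c -> 0 < y -> 0 < d ^+ 2 + (c * y) ^+ 2.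
Proof.
move=> dM y0; have := mob_denom_gt0 0 (lt0r_neq0 dM) (lt0r_neq0 y0).
by rewrite mulr0 add0r.
Qed.

Lemma sends_axis_gt0 a b c d y t : 0 < a * d - b * c -> 0 < y ->
  sends_axis a b c d y t -> 0 < t.
Proof.
move=> dM y0 [_ st]; rewrite -(pmulr_lgt0 _ (axis_denom_gt0 dM y0)) -st.
exact: mulr_gt0.
Qed.

Lemma sends_axis_uniq a b c d y t u : 0 < a * d - b * c -> 0 < y ->
  sends_axis a b c d y t -> sends_axis a b c d y u -> t = u.
Proof.
move=> dM y0 [_ st] [_ su]; apply: (mulIf (lt0r_neq0 (axis_denom_gt0 dM y0))).
by rewrite -st -su.
Qed.

Lemma sends_axis_fixed a b c d y : 0 < a * d - b * c -> 0 < y ->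
  sends_axis a b c d y y -> a = d /\ b = - (c * y ^+ 2).
Proof.
move=> dM y0 [e1 e2]; have D0 := lt0r_neq0 (axis_denom_gt0 dM y0).
have e3 : a * d - b * c - (d ^+ 2 + (c * y) ^+ 2) = 0.
  by apply: (mulIf (lt0r_neq0 y0)); rewrite mulrBl e2 mulrC subrr mul0r.
have ad : a = d.
  apply/subr0_eq/(mulIf D0); rewrite mul0r.
  have -> : (a - d) * (d ^+ 2 + (c * y) ^+ 2) =
    d * (a * d - b * c - (d ^+ 2 + (c * y) ^+ 2)) + c * (b * d + a * c * y ^+ 2) by ring.
  by rewrite e3 e1 !mulr0 addr0.
split=> //; subst a; apply/subr0_eq/(mulIf D0); rewrite opprK.
have -> : (b + c * y ^+ 2) * (d ^+ 2 + (c * y) ^+ 2) =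
  d * (b * d + d * c * y ^+ 2) - c * y ^+ 2 * (d * d - b * c - (d ^+ 2 + (c * y) ^+ 2)) by ring.
by rewrite e1 e3 !mulr0 subrr mul0r.
Qed.

Lemma sends_axis_fixed2 a b c d y t : 0 < a * d - b * c -> 0 < y -> 0 < t -> y != t ->
  sends_axis a b c d y y -> sends_axis a b c d t t -> [/\ a = d, b = 0 & c = 0].
Proof.
move=> dM y0 t0 yt /(sends_axis_fixed dM y0)[ad b_y] /(sends_axis_fixed dM t0)[_ b_t].
have yt2 : y ^+ 2 - t ^+ 2 != 0 by rewrite subr_eq0 eqrXn2 ?ltW.
have c0 : c = 0.
  apply: (mulIf yt2); rewrite mul0r mulrBr.
  by rewrite -[c * y ^+ 2]opprK -b_y b_t opprK subrr.
by split=> //; rewrite b_y c0 mul0r oppr0.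
Qed.

Lemma sends_axis_stable a b c d y t y' t' : 0 < a * d - b * c -> 0 < y -> 0 < t -> y != t ->
  sends_axis a b c d y y' -> sends_axis a b c d t t' -> (b = 0 /\ c = 0) \/ (a = 0 /\ d = 0).
Proof.
move=> dM y0 t0 yt [ey _] [et _].
have yt2 : y ^+ 2 - t ^+ 2 != 0 by rewrite subr_eq0 eqrXn2 ?ltW.
have ac : a * c = 0.
  apply: (mulIf yt2); rewrite mul0r.
  have -> : a * c * (y ^+ 2 - t ^+ 2) = (b * d + a * c * y ^+ 2) - (b * d + a * c * t ^+ 2) by ring.
  by rewrite ey et subrr.
have bd : b * d = 0 by move: ey; rewrite ac mul0r addr0.
move: dM; move/eqP: ac; move/eqP: bd; rewrite !mulf_eq0 => /orP[]/eqP-> /orP[]/eqP->;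
  rewrite ?mulr0 ?mul0r ?subrr ?ltxx => // _; by [left | right].
Qed.

Lemma sends_axis_diag a d y t : 0 < a * d -> sends_axis a 0 0 d y t -> a * y = d * t.
Proof.
move=> ad [_]; rewrite mulr0 subr0 mul0r expr0n addr0 => e.
have d0 : d != 0 by apply: contraTneq ad => ->; rewrite mulr0 ltxx.
by apply: (mulIf d0); rewrite mulrAC e; ring.
Qed.

Lemma sends_axis_antidiag b c y t : 0 < - (b * c) -> 0 < y ->
  sends_axis 0 b c 0 y t -> b = - (c * (t * y)).
Proof.
move=> bc y0 [_]; rewrite mul0r sub0r expr0n add0r => e.
have c0 : c != 0 by apply: contraTneq bc => ->; rewrite mulr0 oppr0 ltxx.
have cy : c * y != 0 by rewrite mulf_neq0 // lt0r_neq0.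
apply: (mulIf cy); have -> : b * (c * y) = - (- (b * c) * y) by ring.
by rewrite e; ring.
Qed.

Lemma sends_axis_antidiag_mul b c y y' t t' : 0 < - (b * c) -> 0 < y -> 0 < y' ->
  sends_axis 0 b c 0 y t -> sends_axis 0 b c 0 y' t' -> t * y = t' * y'.
Proof.
move=> bc y0 y'0 Hy Hy'.
have c0 : c != 0 by apply: contraTneq bc => ->; rewrite mulr0 oppr0 ltxx.
apply: (mulfI c0); apply: oppr_inj.
by rewrite -(sends_axis_antidiag bc y0 Hy) -(sends_axis_antidiag bc y'0 Hy').
Qed.

Lemma commute_rotations a b c d e f g h y : 0 < a * d - b * c -> 0 < e * h - f * g -> 0 < y ->
  sends_axis a b c d y y -> sends_axis e f g h y y ->
  mx2 a b c d *m mx2 e f g h = mx2 e f g h *m mx2 a b c d.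
Proof.
move=> dM dN y0 /(sends_axis_fixed dM y0)[-> ->] /(sends_axis_fixed dN y0)[-> ->].
by rewrite !mul_mx2; congr mx2; ring.
Qed.

Lemma commute_of_fixed a b c d e f g h y t : 0 < a * d - b * c -> 0 < e * h - f * g -> 0 < y ->
  sends_axis e f g h y y -> sends_axis a b c d y t -> sends_axis e f g h t t ->
  mx2 a b c d *m mx2 e f g h = mx2 e f g h *m mx2 a b c d.
Proof.
move=> dM dN y0 Ny My Nt; have [yt|yt] := eqVneq y t.
  by subst t; exact: commute_rotations dM dN y0 My Ny.
have [-> -> ->] := sends_axis_fixed2 dN y0 (sends_axis_gt0 dM y0 My) yt Ny Nt.
by rewrite !mul_mx2; congr mx2; ring.
Qed.

Lemma commute_diag_antidiag a d f g y t1 t2 t3 :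
  0 < a * d -> 0 < - (f * g) -> 0 < y -> 0 < t1 -> 0 < t3 ->
  sends_axis 0 f g 0 y t3 -> sends_axis a 0 0 d y t1 ->
  sends_axis a 0 0 d t3 t2 -> sends_axis 0 f g 0 t1 t2 ->
  mx2 a 0 0 d *m mx2 0 f g 0 = mx2 0 f g 0 *m mx2 a 0 0 d.
Proof.
move=> ad fg y0 t1_gt0 t3_gt0 Ny My Mt3 Nt1.
have hN := sends_axis_antidiag_mul fg y0 t1_gt0 Ny Nt1.
have hM1 := sends_axis_diag ad My; have hM2 := sends_axis_diag ad Mt3.
have apd : a + d != 0.
  apply: contraTneq ad => /eqP; rewrite addr_eq0 => /eqP->.
  by rewrite mulNr oppr_gt0 ltNge -expr2 sqr_ge0.
have -> : a = d.
  (* computing the height t2 in two ways forces a ^+ 2 = d ^+ 2 *)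
  apply/subr0_eq/(mulIf (mulf_neq0 apd (mulf_neq0 (lt0r_neq0 t3_gt0) (lt0r_neq0 y0)))).
  have -> : (a - d) * ((a + d) * (t3 * y)) = (a * y) * (a * t3) - d ^+ 2 * (t3 * y) by ring.
  by rewrite hM1 hM2 hN; ring.
by rewrite !mul_mx2; congr mx2; ring.
Qed.

Lemma commute_antidiag b c f g y t1 t2 t3 :
  0 < - (b * c) -> 0 < - (f * g) -> 0 < y -> 0 < t1 -> 0 < t3 ->
  sends_axis 0 f g 0 y t3 -> sends_axis 0 b c 0 y t1 ->
  sends_axis 0 b c 0 t3 t2 -> sends_axis 0 f g 0 t1 t2 ->
  mx2 0 b c 0 *m mx2 0 f g 0 = mx2 0 f g 0 *m mx2 0 b c 0.
Proof.
move=> bc fg y0 t1_gt0 t3_gt0 Ny My Mt3 Nt1.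
have hM := sends_axis_antidiag_mul bc y0 t3_gt0 My Mt3.
have hN := sends_axis_antidiag_mul fg y0 t1_gt0 Ny Nt1.
have t13 : t1 = t3.
  apply/subr0_eq/(mulIf (mulf_neq0 (lt0r_neq0 (addr_gt0 t1_gt0 t3_gt0)) (lt0r_neq0 y0))).
  have -> : (t1 - t3) * ((t1 + t3) * y) = t1 * (t1 * y) - t3 * (t3 * y) by ring.
  by rewrite hM hN; ring.
(* both maps are now the half-turn about the point i sqrt (t1 y) *)
subst t3; rewrite (sends_axis_antidiag bc y0 My) (sends_axis_antidiag fg y0 Ny).
by rewrite !mul_mx2; congr mx2; ring.
Qed.

Lemma commute_of_sends_axis a b c d e f g h y t1 t2 t3 :
  0 < a * d - b * c -> 0 < e * h - f * g -> 0 < y ->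
  sends_axis e f g h y t3 -> sends_axis a b c d y t1 ->
  sends_axis a b c d t3 t2 -> sends_axis e f g h t1 t2 ->
  mx2 a b c d *m mx2 e f g h = mx2 e f g h *m mx2 a b c d.
Proof.
move=> dM dN y0 Ny My Mt3 Nt1.
have t1_gt0 := sends_axis_gt0 dM y0 My; have t3_gt0 := sends_axis_gt0 dN y0 Ny.
have [yt3|yt3] := eqVneq y t3.
  subst t3; have t12 := sends_axis_uniq dM y0 My Mt3; subst t2.
  exact: commute_of_fixed dM dN y0 Ny My Nt1.
have [yt1|yt1] := eqVneq y t1.
  subst t1; have t32 := sends_axis_uniq dN y0 Ny Nt1; subst t2.
  exact/esym/(commute_of_fixed dN dM y0 My Ny Mt3).
have [[b0 c0]|[a0 d0]] := sends_axis_stable dM y0 t3_gt0 yt3 My Mt3;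
have [[f0 g0]|[e0 h0]] := sends_axis_stable dN y0 t1_gt0 yt1 Ny Nt1;
  subst; rewrite ?mul0r ?mulr0 ?subr0 ?sub0r in dM dN.
- by rewrite !mul_mx2; congr mx2; ring.
- exact: commute_diag_antidiag dM dN y0 t1_gt0 t3_gt0 Ny My Mt3 Nt1.
- exact/esym/(commute_diag_antidiag dN dM y0 t3_gt0 t1_gt0 My Ny Nt1 Mt3).
- exact: commute_antidiag dM dN y0 t1_gt0 t3_gt0 Ny My Mt3 Nt1.
Qed.
End AxisMaps.

Section Mobius.
Variable R : realType.
Implicit Types (a b c d e f g h x y : R) (A B M k : 'M[R]_2) (z : R * R).

Lemma mob_mx2 a b c d x y : mob (mx2 a b c d) (x, y) =
  (((a * x + b) * (c * x + d) + a * c * y ^+ 2) / ((c * x + d) ^+ 2 + (c * y) ^+ 2),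
   (a * d - b * c) * y / ((c * x + d) ^+ 2 + (c * y) ^+ 2)).
Proof. by rewrite /mob !mx2E. Qed.

Lemma mob_mul A B z : \det A != 0 -> \det B != 0 -> z.2 != 0 ->
  mob (A *m B) z = mob A (mob B z).
Proof.
have [a [b [c [d ->]]]] := mx2_surj A; have [e [f [g [h ->]]]] := mx2_surj B.
case: z => x y; rewrite mul_mx2 !det_mx2 /= => dA dB y0.
have dAB : (a * e + b * g) * (c * f + d * h) - (a * f + b * h) * (c * e + d * g) != 0.
  by rewrite (_ : _ - _ = (a * d - b * c) * (e * h - f * g)) ?mulf_neq0 //; ring.
have DB := lt0r_neq0 (mob_denom_gt0 x dB y0); have DAB := lt0r_neq0 (mob_denom_gt0 x dAB y0).
rewrite [mob (mx2 e f g h) _]mob_mx2 !mob_mx2.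
have key : (c * (((e * x + f) * (g * x + h) + e * g * y ^+ 2) / ((g * x + h) ^+ 2 + (g * y) ^+ 2))
           + d) ^+ 2 + (c * ((e * h - f * g) * y / ((g * x + h) ^+ 2 + (g * y) ^+ 2))) ^+ 2
    = (((c * e + d * g) * x + (c * f + d * h)) ^+ 2 + ((c * e + d * g) * y) ^+ 2)
      / ((g * x + h) ^+ 2 + (g * y) ^+ 2) by field.
by rewrite key; congr pair; field; rewrite DB DAB.
Qed.

Lemma mob1 z : mob 1%:M z = z.
Proof. by case: z => x y; rewrite /mob !mxE /=; congr pair; field. Qed.

Lemma mob_H2 M z : 0 < \det M -> H2 z -> H2 (mob M z).
Proof.
have [a [b [c [d ->]]]] := mx2_surj M; case: z => x y.
rewrite det_mx2 /H2 mob_mx2 /= => dM y0.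
by rewrite divr_gt0 ?mulr_gt0 ?(mob_denom_gt0 x (lt0r_neq0 dM) (lt0r_neq0 y0)).
Qed.

Lemma mobKV M z : \det M != 0 -> z.2 != 0 -> mob M (mob (invmx M) z) = z.
Proof.
move=> dM y0; have uM : M \in unitmx by rewrite unitmxE unitfE.
by rewrite -mob_mul ?det_inv ?invr_neq0 // mulmxV // mob1.
Qed.

Lemma mob_conj k M z : 0 < \det k -> 0 < \det M -> H2 z ->
  mob (k *m M *m invmx k) (mob k z) = mob k (mob M z).
Proof.
move=> dk dM Hz; have uk : k \in unitmx by rewrite unitmxE unitfE lt0r_neq0.
have dk0 := lt0r_neq0 dk; have dM0 := lt0r_neq0 dM; have y0 := lt0r_neq0 Hz.
rewrite -mob_mul ?det_mulmx ?det_inv ?mulf_neq0 ?invr_neq0 // -mulmxA mulVmx // mulmx1.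
by rewrite mob_mul ?det_mulmx ?mulf_neq0.
Qed.

Lemma geodesic_to_axis (G : R * R -> Prop) : is_geodesic G ->
  exists k, 0 < \det k /\ forall z, G z -> (mob k z).1 = 0.
Proof.
case=> [[x0 Gx0] | [c [r [r_gt0 Gcr]]]].
  exists (mx2 1 (- x0) 0 1); rewrite det_mx2 mulr1 mulr0 subr0 ltr01; split=> // -[x y].
  rewrite mob_mx2 => /Gx0[_ /= ->] /=; by rewrite !(mul1r, mul0r, subrr, add0r).
(* z |-> (z - (c - r)) / (c + r - z) sends c - r to 0 and c + r to infinity *)
exists (mx2 1 (r - c) (-1) (c + r)); rewrite det_mx2; split.
  by rewrite (_ : 1 * (c + r) - (r - c) * -1 = r + r) ?addr_gt0 //; ring.
case=> x y; rewrite mob_mx2 => /Gcr[_ /= circle] /=.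
have -> : (1 * x + (r - c)) * (-1 * x + (c + r)) + 1 * -1 * y ^+ 2 =
  r ^+ 2 - ((x - c) ^+ 2 + y ^+ 2) by ring.
by rewrite circle subrr mul0r.
Qed.

Lemma sends_axis_mob a b c d y : 0 < a * d - b * c -> 0 < y ->
  (mob (mx2 a b c d) (0, y)).1 = 0 -> sends_axis a b c d y (mob (mx2 a b c d) (0, y)).2.
Proof.
move=> dM y0; have D := lt0r_neq0 (axis_denom_gt0 dM y0).
rewrite mob_mx2 /= !mulr0 !add0r => /eqP; rewrite mulf_eq0 invr_eq0 (negbTE D) orbF => /eqP num0.
split; first by rewrite -num0; ring.
by field.
Qed.

Lemma axis_pointE z : z.1 = 0 -> z = (0, z.2).
Proof. by case: z => x y /= ->. Qed.

Lemma commute_of_axis_square M N y : 0 < \det M -> 0 < \det N -> 0 < y ->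
  (mob M (0, y)).1 = 0 -> (mob N (0, y)).1 = 0 -> (mob M (mob N (0, y))).1 = 0 ->
  mob M (mob N (0, y)) = mob N (mob M (0, y)) -> M *m N = N *m M.
Proof.
have [a [b [c [d ->]]]] := mx2_surj M; have [e [f [g [h ->]]]] := mx2_surj N.
rewrite !det_mx2 => dM dN y0 My0 Ny0; rewrite (axis_pointE Ny0) (axis_pointE My0) => MNy0 MN_NM.
have My := sends_axis_mob dM y0 My0; have Ny := sends_axis_mob dN y0 Ny0.
have Mt3 := sends_axis_mob dM (sends_axis_gt0 dN y0 Ny) MNy0.
have := sends_axis_mob dN (sends_axis_gt0 dM y0 My); rewrite -MN_NM => Nt1.
exact: commute_of_sends_axis dM dN y0 Ny My Mt3 (Nt1 MNy0).
Qed.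

Lemma commute_of_geodesic_square (G : R * R -> Prop) A B p : is_geodesic G ->
  0 < \det A -> 0 < \det B -> H2 p ->
  G p -> G (mob A p) -> G (mob B p) -> G (mob A (mob B p)) ->
  mob A (mob B p) = mob B (mob A p) -> A *m B = B *m A.
Proof.
move=> geoG dA dB Hp Gp GAp GBp GABp ABp.
have [k [dk Gk]] := geodesic_to_axis geoG.
have uk : k \in unitmx by rewrite unitmxE unitfE lt0r_neq0.
have det_conj C : \det (k *m C *m invmx k) = \det C.
  by rewrite !det_mulmx det_inv mulrAC mulfV ?mul1r // lt0r_neq0.
apply: (conjmx_inj uk); rewrite /= -!conjmx_mul //.
have kp : mob k p = (0, (mob k p).2) := axis_pointE (Gk _ Gp).
have Hkp := mob_H2 dk Hp; have HAp := mob_H2 dA Hp; have HBp := mob_H2 dB Hp.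
apply: (commute_of_axis_square (y := (mob k p).2));
  rewrite ?det_conj -?kp ?mob_conj ?Gk //; by rewrite ABp.
Qed.

Lemma mob_commutator_fixed (xi eta : 'M[R]_2) (p : R * R) :
  \det xi != 0 -> \det eta != 0 -> p.2 != 0 ->
  mob (xi *m eta *m invmx xi *m invmx eta) p = p ->
  mob (invmx xi) (mob (invmx eta) p) = mob (invmx eta) (mob (invmx xi) p).
Proof.
move=> dxi deta y0 fixed; have uxi : xi \in unitmx by rewrite unitmxE unitfE.
have ueta : eta \in unitmx by rewrite unitmxE unitfE.
have dV C : \det C != 0 -> \det (invmx C) != 0 by move=> dC; rewrite det_inv invr_neq0.
have BAg :
    invmx eta *m invmx xi *m (xi *m eta *m invmx xi *m invmx eta) = invmx xi *m invmx eta.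
  by rewrite !mulmxA -(mulmxA (invmx eta)) mulVmx // mulmx1 mulVmx // mul1mx.
rewrite -!mob_mul ?dV // -BAg [LHS]mob_mul ?fixed // !det_mulmx ?mulf_neq0 ?dV //.
Qed.

Lemma not_elliptic1 : ~ elliptic (1%:M : 'M[R]_2).
Proof.
case=> p [Hp _ fixed_uniq]; have := fixed_uniq (p.1, p.2 + 1) (addr_gt0 Hp ltr01) (mob1 _).
by move=> /(congr1 snd) /= /eqP; rewrite -subr_eq0 addrAC subrr add0r oner_eq0.
Qed.
End Mobius.

Unset Implicit Arguments.

Theorem mainTheorem3 (R : realType) (xi eta : 'M[R]_2) (p : R * R) :
  SL2 xi -> SL2 eta ->
  elliptic (xi *m eta *m invmx xi *m invmx eta) ->
  H2 p -> mob (xi *m eta *m invmx xi *m invmx eta) p = p ->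
  ~ (exists G : R * R -> Prop,
       [/\ is_geodesic G,
           G (mob eta (mob (invmx xi) (mob (invmx eta) p))),
           G (mob (invmx xi) (mob (invmx eta) p)),
           G (mob (invmx eta) p)
         & G p]).
Proof.
rewrite /SL2 => dxi deta ell Hp fixed [G [geoG G1 G2 G3 G4]].
have uxi : xi \in unitmx by rewrite unitmxE dxi unitr1.
have ueta : eta \in unitmx by rewrite unitmxE deta unitr1.
have dV_gt0 (C : 'M[R]_2) : \det C = 1 -> 0 < \det (invmx C).
  by move=> dC; rewrite det_inv dC invr1 ltr01.
have ABp : mob (invmx xi) (mob (invmx eta) p) = mob (invmx eta) (mob (invmx xi) p).
  by apply: mob_commutator_fixed; rewrite ?dxi ?deta ?oner_neq0 ?lt0r_neq0.
have GAp : G (mob (invmx xi) p).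
  have y1 : (mob (invmx xi) p).2 != 0 by rewrite lt0r_neq0 ?mob_H2 ?dV_gt0.
  by rewrite -[mob (invmx xi) p](mobKV (M := eta)) ?deta ?oner_neq0 // -ABp.
have AB := commute_of_geodesic_square geoG (dV_gt0 _ dxi) (dV_gt0 _ deta) Hp G4 GAp G3 G2 ABp.
suff g1 : xi *m eta *m invmx xi *m invmx eta = 1%:M.
  by move: ell; rewrite g1; exact: not_elliptic1.
by rewrite -mulmxA AB mulmxA -(mulmxA xi) mulmxV // mulmx1 mulmxV.
Qed.
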